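(* Let $p>1$, $q=\frac{p}{p-1}$ and $0<a<b$. Then $$|A(a,b)-L(a,b)|\le \frac{\log b-\log a}{2(p+1)^{1/p}}\,\bigl(A(|a|^q,|b|^q)\bigr)^{1/q}.$$
   Context: For positive $x,y$: the arithmetic mean is $A(x,y)=\frac{x+y}{2}$; the logarithmic mean is $L(x,y)=x$ if $x=y$ and $L(x,y)=\frac{y-x}{\log y-\log x}$ if $x\ne y$. *)

From Stdlib Require Import Reals.
Open Scope R_scope.

Definition AM (x y : R) : R := (x + y) / 2.

Definition LM (x y : R) : R :=
  if Req_EM_T x y then x else (y - x) / (ln y - ln x).

(* Put b = a e^h with h = ln b - ln a.  Then A - L = a (e^h (h-2) + h + 2) / (2h), and two
   elementary exponential inequalities give 0 <= A - L <= h b / 8.  The stated bound is weaker: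
   (p+1)^(1/p) <= 2 since p + 1 <= 2^p, and the q-power mean of a and b is at least b / 2. *)
From Stdlib Require Import Reals Lra Psatz.
From Coquelicot Require Import Coquelicot.
Open Scope R_scope.

Lemma le_of_nonneg_derive (f f' : R -> R) (h : R) :
  0 <= h ->
  (forall x, 0 <= x <= h -> is_derive f x (f' x)) ->
  (forall x, 0 <= x <= h -> 0 <= f' x) ->
  f 0 <= f h.
Proof.
intros Hh Hder Hpos.
destruct (Req_dec h 0) as [->|Hh0]; [lra|].
destruct (MVT_cor2 f f' 0 h) as [c [Hfc Hc]]; [lra| |].
- intros x Hx; apply is_derive_Reals, Hder; exact Hx.
- assert (0 <= f' c) by (apply Hpos; lra); nra.
Qed.

Lemma exp_mean_gap_lower (h : R) : 0 <= h -> 0 <= exp h * (h - 2) + h + 2.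
Proof.
intros Hh.
enough (Hmono : exp 0 * (0 - 2) + 0 + 2 <= exp h * (h - 2) + h + 2)
  by (rewrite exp_0 in Hmono; lra).
apply (le_of_nonneg_derive (fun x => exp x * (x - 2) + x + 2)
         (fun x => exp x * (x - 1) + 1) h Hh).
- intros x _; auto_derive; [exact I | ring].
- intros x _.
  (* e^(-x) >= 1 - x, i.e. e^x (1 - x) <= 1 *)
  assert (Hinv : exp (- x) * exp x = 1) by (rewrite <- exp_plus, Rplus_opp_l; apply exp_0).
  assert (H1 := exp_ineq1_le (- x)); assert (H2 := exp_pos x); nra.
Qed.

Lemma exp_mean_gap_upper (h : R) :
  0 <= h -> 0 <= exp h * (h ^ 2 - 4 * h + 8) - 4 * h - 8.
Proof.
intros Hh.
enough (Hmono : exp 0 * (0 ^ 2 - 4 * 0 + 8) - 4 * 0 - 8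
                <= exp h * (h ^ 2 - 4 * h + 8) - 4 * h - 8)
  by (rewrite exp_0 in Hmono; lra).
apply (le_of_nonneg_derive (fun x => exp x * (x ^ 2 - 4 * x + 8) - 4 * x - 8)
         (fun x => exp x * (x ^ 2 - 2 * x + 4) - 4) h Hh).
- intros x _; auto_derive; [exact I | ring].
- intros x [Hx _].
  (* e^x >= 1 + x, and (1 + x)(x^2 - 2x + 4) - 4 = x (x^2 - x + 2) *)
  assert (Hq : 0 < x ^ 2 - 2 * x + 4) by nra.
  assert (H1 := exp_ineq1_le x); nra.
Qed.

Lemma LM_lt (x y : R) : x < y -> LM x y = (y - x) / (ln y - ln x).
Proof. intros Hxy; unfold LM; destruct (Req_EM_T x y); [lra | reflexivity]. Qed.

Lemma AM_sub_LM_exp (a h : R) : 0 < a -> 0 < h ->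
  AM a (a * exp h) - LM a (a * exp h) = a * (exp h * (h - 2) + h + 2) / (2 * h).
Proof.
intros Ha Hh.
assert (HE : 1 < exp h) by (rewrite <- exp_0; apply exp_increasing, Hh).
rewrite LM_lt by nra.
rewrite ln_mult, ln_exp by (try apply exp_pos; lra).
unfold AM; field; lra.
Qed.

Lemma AM_sub_LM_bounds (a b : R) : 0 < a -> a < b ->
  0 <= AM a b - LM a b <= (ln b - ln a) * b / 8.
Proof.
intros Ha Hab.
set (h := ln b - ln a).
assert (Hh : 0 < h) by (assert (ln a < ln b) by (apply ln_increasing; lra); unfold h; lra).
assert (Hb : b = a * exp h).
{ unfold h, Rminus; rewrite exp_plus, exp_Ropp, !exp_ln by lra; field; lra. }
rewrite Hb, AM_sub_LM_exp by assumption.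
assert (Hlo := exp_mean_gap_lower h (Rlt_le _ _ Hh)).
assert (Hup := exp_mean_gap_upper h (Rlt_le _ _ Hh)).
split.
- apply Rdiv_le_0_compat; nra.
- apply Rmult_le_reg_r with (8 * h / a); [apply Rdiv_lt_0_compat; lra|].
  replace (a * (exp h * (h - 2) + h + 2) / (2 * h) * (8 * h / a))
    with (4 * (exp h * (h - 2) + h + 2)) by (field; lra).
  replace (h * (a * exp h) / 8 * (8 * h / a)) with (h ^ 2 * exp h) by (field; lra).
  lra.
Qed.

Lemma exp_le_compat (x y : R) : x <= y -> exp x <= exp y.
Proof. intros [Hlt | ->]; [apply Rlt_le, exp_increasing, Hlt | apply Rle_refl]. Qed.

Lemma succ_le_Rpower_2 (p : R) : 1 <= p -> p + 1 <= Rpower 2 p.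
Proof.
intros Hp.
rewrite <- (exp_ln (p + 1)) by lra; unfold Rpower.
apply exp_le_compat.
(* ln ((p+1)/2) <= (p-1)/2 <= (p-1) ln 2 *)
assert (Hln := exp_ineq1_le (ln ((p + 1) / 2))).
rewrite exp_ln in Hln by lra; rewrite ln_div in Hln by lra.
assert (H2 := ln_lt_2); nra.
Qed.

Lemma Rpower_succ_inv_le_2 (p : R) : 1 <= p -> Rpower (p + 1) (1 / p) <= 2.
Proof.
intros Hp.
replace 2 with (Rpower (Rpower 2 p) (1 / p))
  by (rewrite Rpower_mult; replace (p * (1 / p)) with 1 by (field; lra); apply Rpower_1; lra).
apply Rle_Rpower_l; [apply Rlt_le, Rdiv_lt_0_compat; lra|].
split; [lra | apply succ_le_Rpower_2, Hp].
Qed.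

Lemma half_le_power_mean (q x y : R) : 1 <= q -> 0 < x -> 0 < y ->
  y / 2 <= Rpower (AM (Rpower x q) (Rpower y q)) (1 / q).
Proof.
intros Hq Hx Hy.
assert (Hxq : 0 < Rpower x q) by apply exp_pos.
assert (Hyq : 0 < Rpower y q) by apply exp_pos.
rewrite <- (exp_ln (y / 2)) by lra; unfold Rpower at 1.
apply exp_le_compat.
assert (Hmean : ln (Rpower y q / 2) <= ln (AM (Rpower x q) (Rpower y q)))
  by (apply ln_le; unfold AM; lra).
rewrite ln_div, ln_Rpower in Hmean by lra.
rewrite ln_div by lra.
assert (H2 := ln_lt_2).
assert (Hinv : 0 < 1 / q <= 1)
  by (split; [apply Rdiv_lt_0_compat | apply (Rdiv_le_1 1 q)]; lra).
assert (Hscale : 1 / q * (q * ln y - ln 2) <= 1 / q * ln (AM (Rpower x q) (Rpower y q)))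
  by (apply Rmult_le_compat_l; lra).
replace (1 / q * (q * ln y - ln 2)) with (ln y - 1 / q * ln 2) in Hscale by (field; lra).
nra.
Qed.

Theorem proposition1 (p q a b : R) :
  1 < p -> q = p / (p - 1) -> 0 < a -> a < b ->
  Rabs (AM a b - LM a b) <=
    (ln b - ln a) / (2 * Rpower (p + 1) (1 / p)) *
    Rpower (AM (Rpower (Rabs a) q) (Rpower (Rabs b) q)) (1 / q).
Proof.
intros Hp Hq Ha Hab.
assert (Hq1 : 1 <= q) by (rewrite Hq; apply Rle_div_r; lra).
destruct (AM_sub_LM_bounds a b Ha Hab) as [Hgap_ge0 Hgap_le].
assert (Hh : 0 < ln b - ln a) by (assert (ln a < ln b) by (apply ln_increasing; lra); lra).
assert (HP : 0 < Rpower (p + 1) (1 / p)) by apply exp_pos.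
assert (HP2 := Rpower_succ_inv_le_2 p (Rlt_le _ _ Hp)).
assert (HM := half_le_power_mean q a b Hq1 Ha (Rlt_trans _ _ _ Ha Hab)).
rewrite Rabs_pos_eq, (Rabs_pos_eq a), (Rabs_pos_eq b) by lra.
eapply Rle_trans; [exact Hgap_le|].
set (P := Rpower (p + 1) (1 / p)) in *.
set (M := Rpower (AM (Rpower a q) (Rpower b q)) (1 / q)) in *.
replace ((ln b - ln a) * b / 8) with ((ln b - ln a) / (2 * P) * (b * P / 4)) by (field; lra).
apply Rmult_le_compat_l; [apply Rdiv_le_0_compat; lra | nra].
Qed.
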